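(* Let $U=\begin{pmatrix} a & b\\ c & d\end{pmatrix}$ be a $2\times 2$ unitary matrix with $abcd\neq 0$, let $\triangle=\det U=ad-bc$, and let $P=\begin{pmatrix} a & b\\ 0&0\end{pmatrix}$, $Q=\begin{pmatrix} 0&0\\ c & d\end{pmatrix}$, $R=\begin{pmatrix} c & d\\ 0&0\end{pmatrix}$, $S=\begin{pmatrix} 0&0\\ a & b\end{pmatrix}$. For integers $l,m\ge 0$ with $l+m=n\ge 1$, let $\Xi(l,m)$ denote the sum of all products $M_1M_2\cdots M_n$ with each $M_j\in\{P,Q\}$, in which exactly $l$ factors equal $P$ and exactly $m$ factors equal $Q$ (one term for each such word). Then: (i) if $\min\{l,m\}\ge 1$, $$\Xi(l,m)=a^l\,\overline{a}^{\,m}\,\triangle^m\sum_{\gamma=1}^{\min\{l,m\}}\left(-\frac{|b|^2}{|a|^2}\right)^{\gamma}\binom{l-1}{\gamma-1}\binom{m-1}{\gamma-1}\left[\frac{l-\gamma}{a\gamma}P+\frac{m-\gamma}{\triangle\,\overline{a}\,\gamma}Q-\frac{1}{\triangle\,\overline{b}}R+\frac{1}{b}S\right];$$ (ii) if $l=n\ge 1$ and $m=0$, then $\Xi(l,0)=a^{l-1}P$; (iii) if $l=0$ and $m=n\ge 1$, then $\Xi(0,m)=\triangle^{m-1}\overline{a}^{\,m-1}Q$.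
   Context: $\overline{z}$ denotes the complex conjugate of $z\in\mathbf{C}$. Unitarity of $U$ gives $|a|^2+|b|^2=|c|^2+|d|^2=1$, $a\overline c+b\overline d=0$, $c=-\triangle\overline{b}$, $d=\triangle\overline{a}$, $|\triangle|=1$. *)

From HB Require Import structures.
From mathcomp Require Import all_boot all_order all_algebra.
Set Implicit Arguments. Unset Strict Implicit. Unset Printing Implicit Defensive.
Import Order.TTheory GRing.Theory Num.Theory.
Local Open Scope ring_scope.

Definition mx2 (C : numClosedFieldType) (x y z w : C) : 'M[C]_2 :=
  \matrix_(i < 2, j < 2)
    if i == 0 then (if j == 0 then x else y) else (if j == 0 then z else w).

Definition adjoint (C : numClosedFieldType) (n : nat) (A : 'M[C]_n) : 'M[C]_n :=
  (map_mx Num.conj A)^T.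

Definition unitary_mx (C : numClosedFieldType) (n : nat) (A : 'M[C]_n) : Prop :=
  A *m adjoint A = 1%:M.

Definition Xi (C : numClosedFieldType) (X Y : 'M[C]_2) (l m : nat) : 'M[C]_2 :=
  \sum_(w : (l + m).-tuple bool | count id w == l)
     \prod_(x <- w) (if x then X else Y).

(* Each of P, Q, R, S is e_i x^T with x a row of U, so a word in P and Q collapses to
   one of P, R, S, Q according to its first and last letters, times the product of
   a, b, c, d over its adjacent letter pairs (PP, PQ, QP, QQ).  Grouping the words
   by their ends and by their number of runs, which compositions count, writes
   Xi(l, m) as a combination of P, Q, R, S whose coefficients are run-generating
   polynomials in r = bc/(ad); this closed form is verified against the recursion
   Xi(l+1, m+1) = P Xi(l, m+1) + Q Xi(l+1, m).  Unitarity gives c = -D b^* and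
   d = D a^*, so that r = -|b|^2/|a|^2, and the binomial form follows from
   C(n, k+1) = C(n, k) (n - k)/(k + 1). *)

From HB Require Import structures.
From mathcomp Require Import all_boot all_order all_algebra.
From mathcomp Require Import ring zify.
Import Order.TTheory GRing.Theory Num.Theory.
Set Implicit Arguments. Unset Strict Implicit. Unset Printing Implicit Defensive.
Local Open Scope ring_scope.

(* Compositions of [i] into [j] positive parts; [ncomp 0 0 = 1]. *)
Definition ncomp (i j : nat) : nat :=
  match i, j with
  | 0, 0 => 1
  | i'.+1, j'.+1 => 'C(i', j')
  | _, _ => 0
  end.

Lemma ncomp_small i j : (i < j)%N -> ncomp i j = 0%N.
Proof. by case: i => [|i]; case: j => [|j] //= h; apply: bin_small. Qed.

Lemma ncompSS i j : ncomp i.+1 j.+1 = (ncomp i j + ncomp i j.+1)%N.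
Proof. by case: i => [|i]; case: j => [|j] //=; rewrite ?bin0n ?bin0 // binS addnC. Qed.

Lemma ncomp0_mul i j : (0 < i + j)%N -> (ncomp i 0 * ncomp j 0 = 0)%N.
Proof. by case: i => [|i]; case: j. Qed.

Lemma big_ord_trunc (V : nmodType) n N (F : nat -> V) : (n <= N)%N ->
  (forall k, (n <= k < N)%N -> F k = 0) -> \sum_(k < N) F k = \sum_(k < n) F k.
Proof.
move=> le_nN F0; rewrite (big_ord_widen _ _ le_nN) [RHS]big_rmcond // => k.
by rewrite -leqNgt => le_nk; apply: F0; rewrite le_nk ltn_ord.
Qed.

Section RunGeneratingFunctions.

Variables (R : comNzRingType) (r : R).

(* [gfPP l m] (resp. [gfPQ l m]) is the sum of [r ^+ k] over the words with [l]
   letters P and [m] letters Q that begin with P and end with P (resp. Q), where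
   [k + 1] is the number of runs of P. *)
Definition gfPP (l m : nat) : R :=
  \sum_(k < (l + m).+1) (ncomp l k.+1 * ncomp m k)%:R * r ^+ k.

Definition gfPQ (l m : nat) : R :=
  \sum_(k < (l + m).+1) (ncomp l k.+1 * ncomp m k.+1)%:R * r ^+ k.

Lemma gfPQC l m : gfPQ l m = gfPQ m l.
Proof. by rewrite /gfPQ addnC; apply: eq_bigr => k _; rewrite mulnC. Qed.

Lemma gfPP_Sl l m : (0 < l + m)%N -> gfPP l.+1 m = gfPP l m + r * gfPQ l m.
Proof.
move=> lm; rewrite /gfPP /gfPQ addSn.
under eq_bigr do rewrite ncompSS mulnDl natrD mulrDl.
rewrite big_split /= addrC; congr (_ + _).
  by rewrite big_ord_recr /= (@ncomp_small m) ?muln0 ?mul0r ?addr0 // ltnS leq_addl.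
rewrite big_ord_recl /= ncomp0_mul // mul0r add0r mulr_sumr.
by apply: eq_bigr => k _; rewrite exprS mulrCA.
Qed.

Lemma gfPQ_Sl l m : gfPQ l.+1 m = gfPP m l + gfPQ l m.
Proof.
rewrite /gfPP /gfPQ addSn [(m + l)%N]addnC.
under eq_bigr do rewrite ncompSS mulnDl natrD mulrDl.
have m_small : (m < (l + m).+2)%N by lia.
rewrite big_split /=; congr (_ + _);
  rewrite big_ord_recr /= (ncomp_small m_small) muln0 mul0r addr0 //.
by apply: eq_bigr => k _; rewrite mulnC.
Qed.

Lemma gfPP_0l m : gfPP 0 m = 0.
Proof. by rewrite /gfPP big1 // => k _; rewrite mul0n mul0r. Qed.

Lemma gfPP_Sl0 l : gfPP l.+1 0 = 1.
Proof.
rewrite /gfPP big_ord_recl /= bin0 mulr1 big1 ?addr0 // => k _.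
by rewrite muln0 mul0r.
Qed.

Lemma gfPQ_l0 l : gfPQ l 0 = 0.
Proof. by rewrite /gfPQ big1 // => k _; rewrite muln0 mul0r. Qed.

Lemma gfPP_SS l m :
  gfPP l.+1 m.+1 = \sum_(k < minn l.+1 m.+1) ('C(l, k.+1) * 'C(m, k))%:R * r ^+ k.+1.
Proof.
rewrite /gfPP big_ord_recl /= muln0 mul0r add0r.
apply: (big_ord_trunc (F := fun k => ('C(l, k.+1) * 'C(m, k))%:R * r ^+ k.+1))
  => [|k /andP[lek _]]; first lia.
move: lek; rewrite geq_min => /orP[hl|hm];
  [rewrite (@bin_small l) ?mul0n | rewrite (@bin_small m) ?muln0]; rewrite ?mul0r //; lia.
Qed.

Lemma gfPQ_SS l m :
  gfPQ l.+1 m.+1 = \sum_(k < minn l.+1 m.+1) ('C(l, k) * 'C(m, k))%:R * r ^+ k.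
Proof.
apply: (big_ord_trunc (F := fun k => ('C(l, k) * 'C(m, k))%:R * r ^+ k))
  => [|k /andP[lek _]]; first lia.
move: lek; rewrite geq_min => /orP[hl|hm];
  [rewrite (@bin_small l) ?mul0n | rewrite (@bin_small m) ?muln0]; rewrite ?mul0r //; lia.
Qed.

End RunGeneratingFunctions.

Section WordSums.

Variables (R : nzRingType) (X Y : R).

Definition wordsum (n l : nat) : R :=
  \sum_(w : n.-tuple bool | count id w == l) \prod_(x <- w) (if x then X else Y).

Lemma wordsumS n l :
  wordsum n.+1 l = (if l is l'.+1 then X * wordsum n l' else 0) + Y * wordsum n l.
Proof.
rewrite /wordsum (reindex (fun p : bool * n.-tuple bool => cons_tuple p.1 p.2)) /=;
  last first.
  exists (fun w : n.+1.-tuple bool => (thead w, behead_tuple w)).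
    by move=> [x t] _; congr pair; apply: val_inj.
  by move=> w _; rewrite [RHS]tuple_eta; apply: val_inj.
rewrite -(pair_big_dep xpredT (fun x (t : n.-tuple bool) => count id (x :: t) == l)
  (fun x (t : n.-tuple bool) => \prod_(y <- x :: t) (if y then X else Y))) /=.
rewrite big_bool /= mulr_sumr; congr (_ + _).
  case: l => [|l]; first by rewrite big_pred0.
  by rewrite mulr_sumr; apply: eq_big => [t|t _]; rewrite ?big_cons // add1n eqSS.
by apply: eq_big => [t|t _]; rewrite ?big_cons ?add0n.
Qed.

Lemma wordsum_gt n l : (n < l)%N -> wordsum n l = 0.
Proof.
move=> lt_nl; rewrite /wordsum big_pred0 // => w; apply/negbTE/eqP => count_w.
by move: (count_size id w); rewrite size_tuple count_w leqNgt lt_nl.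
Qed.

Lemma wordsum00 : wordsum 0 0 = 1.
Proof.
by rewrite /wordsum (big_pred1 [tuple]) ?big_nil // => w; rewrite [w]tuple0.
Qed.

End WordSums.

Section XiRecursion.

Variables (C : numClosedFieldType) (X Y : 'M[C]_2).

Lemma Xi00 : Xi X Y 0 0 = 1.
Proof. exact: wordsum00. Qed.

Lemma XiS0 l : Xi X Y l.+1 0 = X * Xi X Y l 0.
Proof.
rewrite /Xi !addn0 -/(wordsum X Y l.+1 l.+1) wordsumS (@wordsum_gt _ _ _ l l.+1) //.
by rewrite mulr0 addr0.
Qed.

Lemma Xi0S m : Xi X Y 0 m.+1 = Y * Xi X Y 0 m.
Proof. by rewrite /Xi -/(wordsum X Y m.+1 0) wordsumS add0r. Qed.

Lemma XiSS l m : Xi X Y l.+1 m.+1 = X * Xi X Y l m.+1 + Y * Xi X Y l.+1 m.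
Proof. by rewrite /Xi -!/(wordsum X Y _ _) !addSn !addnS wordsumS. Qed.

End XiRecursion.

Section TwoByTwo.

Variable C : numClosedFieldType.

Lemma mx2D (x y z w x' y' z' w' : C) :
  mx2 x y z w + mx2 x' y' z' w' = mx2 (x + x') (y + y') (z + z') (w + w').
Proof. by apply/matrixP => i j; rewrite !mxE; case: (i == 0); case: (j == 0). Qed.

Lemma mx2Z (s x y z w : C) : s *: mx2 x y z w = mx2 (s * x) (s * y) (s * z) (s * w).
Proof. by apply/matrixP => i j; rewrite !mxE; case: (i == 0); case: (j == 0). Qed.

Lemma mx2M (x y z w x' y' z' w' : C) :
  mx2 x y z w * mx2 x' y' z' w' =
  mx2 (x * x' + y * z') (x * y' + y * w') (z * x' + w * z') (z * y' + w * w').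
Proof.
apply/matrixP => i j; rewrite -mulmxE !mxE !big_ord_recr big_ord0 /= !mxE add0r.
by case: i => [[|[|i]] //= _]; case: j => [[|[|j]] //= _].
Qed.

Lemma unitary_mx2_row2 (a b c d : C) : unitary_mx (mx2 a b c d) ->
  c = - ((a * d - b * c) * b^*) /\ d = (a * d - b * c) * a^*.
Proof.
move=> U.
have row0_norm : a * a^* + b * b^* = 1.
  by have := congr1 (fun M : 'M[C]_2 => M 0 0) U;
    rewrite /adjoint !mxE !big_ord_recr big_ord0 /= !mxE /= add0r.
have rows_orth : c * a^* + d * b^* = 0.
  by have := congr1 (fun M : 'M[C]_2 => M 1 0) U;
    rewrite /adjoint !mxE !big_ord_recr big_ord0 /= !mxE /= add0r.
split; apply/eqP; rewrite -subr_eq0.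
- have -> : c - - ((a * d - b * c) * b^*) =
            a * (c * a^* + d * b^*) + c * (1 - (a * a^* + b * b^*)) by ring.
  by rewrite rows_orth row0_norm subrr !mulr0 addr0.
- have -> : d - (a * d - b * c) * a^* =
            b * (c * a^* + d * b^*) + d * (1 - (a * a^* + b * b^*)) by ring.
  by rewrite rows_orth row0_norm subrr !mulr0 addr0.
Qed.

End TwoByTwo.

Section ClosedForm.

Variables (C : numClosedFieldType) (a b c d : C).

Local Notation P := (mx2 a b 0 0).
Local Notation Q := (mx2 0 0 c d).
Local Notation R := (mx2 c d 0 0).
Local Notation S := (mx2 0 0 a b).

Definition comb (x y z w : C) : 'M[C]_2 := x *: P + y *: Q + z *: R + w *: S.

Lemma combE x y z w :
  comb x y z w = mx2 (x * a + z * c) (x * b + z * d) (y * c + w * a) (y * d + w * b).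
Proof. by rewrite /comb !mx2Z !mx2D; congr mx2; ring. Qed.

Lemma mulP_comb x y z w : P * comb x y z w = comb (a * x + b * w) 0 (b * y + a * z) 0.
Proof. by rewrite !combE mx2M; congr mx2; ring. Qed.

Lemma mulQ_comb x y z w : Q * comb x y z w = comb 0 (d * y + c * z) 0 (c * x + d * w).
Proof. by rewrite !combE mx2M; congr mx2; ring. Qed.

Lemma combD x y z w x' y' z' w' :
  comb x y z w + comb x' y' z' w' = comb (x + x') (y + y') (z + z') (w + w').
Proof. by rewrite !combE mx2D; congr mx2; ring. Qed.

Lemma combZ s x y z w : s *: comb x y z w = comb (s * x) (s * y) (s * z) (s * w).
Proof. by rewrite !combE mx2Z; congr mx2; ring. Qed.

Lemma comb_subR x y z w : x *: P + y *: Q - z *: R + w *: S = comb x y (- z) w.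
Proof. by rewrite /comb scaleNr. Qed.

Lemma comb_sum n (x y z w : 'I_n -> C) :
  \sum_(i < n) comb (x i) (y i) (z i) (w i) =
  comb (\sum_(i < n) x i) (\sum_(i < n) y i) (\sum_(i < n) z i) (\sum_(i < n) w i).
Proof. by rewrite /comb !big_split /= !scaler_suml. Qed.

Lemma XiS0_mx2 l (Y : 'M[C]_2) : Xi P Y l.+1 0 = a ^+ l *: P.
Proof.
elim: l => [|l IHl]; first by rewrite XiS0 Xi00 mulr1 scale1r.
by rewrite XiS0 IHl -scalerAr mx2M !mx2Z exprS; congr mx2; ring.
Qed.

Lemma Xi0S_mx2 m (X : 'M[C]_2) : Xi X Q 0 m.+1 = d ^+ m *: Q.
Proof.
elim: m => [|m IHm]; first by rewrite Xi0S Xi00 mulr1 scale1r.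
by rewrite Xi0S IHm -scalerAr mx2M !mx2Z exprS; congr mx2; ring.
Qed.

Definition Xi_cf (l m : nat) : 'M[C]_2 :=
  let r := b * c / (a * d) in
  let k := a ^+ l * d ^+ m in
  comb (k * gfPP r l m / a) (k * gfPP r m l / d)
       (k * b * gfPQ r l m / (a * d)) (k * c * gfPQ r l m / (a * d)).

Hypotheses (a0 : a != 0) (d0 : d != 0).

Lemma Xi_cfS0 l : Xi_cf l.+1 0 = a ^+ l *: P.
Proof.
rewrite /Xi_cf gfPP_Sl0 gfPP_0l gfPQ_l0 combE mx2Z; congr mx2;
  rewrite exprS; field; by rewrite ?a0 ?d0.
Qed.

Lemma Xi_cf0S m : Xi_cf 0 m.+1 = d ^+ m *: Q.
Proof.
rewrite /Xi_cf gfPP_Sl0 gfPP_0l gfPQC gfPQ_l0 combE mx2Z; congr mx2;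
  rewrite exprS; field; by rewrite ?a0 ?d0.
Qed.

Lemma Xi_cfSS l m : Xi_cf l.+1 m.+1 = P * Xi_cf l m.+1 + Q * Xi_cf l.+1 m.
Proof.
rewrite /Xi_cf mulP_comb mulQ_comb combD; congr comb.
- by rewrite gfPP_Sl ?addnS // [a ^+ _]exprS; field; rewrite a0 d0.
- by rewrite gfPP_Sl ?addnS // (gfPQC _ m) [d ^+ _]exprS; field; rewrite a0 d0.
- by rewrite gfPQ_Sl [a ^+ _]exprS; field; rewrite a0 d0.
- by rewrite gfPQC gfPQ_Sl (gfPQC _ m) [d ^+ _]exprS; field; rewrite a0 d0.
Qed.

Lemma Xi_closed_form l m : (0 < l + m)%N -> Xi P Q l m = Xi_cf l m.
Proof.
elim: l m => [|l IHl] m lm.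
  by case: m lm => // m _; rewrite Xi0S_mx2 Xi_cf0S.
elim: m lm => [|m IHm] _; first by rewrite XiS0_mx2 Xi_cfS0.
by rewrite XiSS IHl ?addnS // IHm ?addSn // Xi_cfSS.
Qed.

End ClosedForm.

Lemma natr_binS (F : numFieldType) n k :
  'C(n, k.+1)%:R = (n - k)%:R * 'C(n, k)%:R / k.+1%:R :> F.
Proof. by rewrite -natrM -mul_bin_left natrM mulrAC divff ?mul1r // pnatr_eq0. Qed.

Lemma Xi_binomial (C : numClosedFieldType) (a b c d D : C) :
  a != 0 -> b != 0 -> D != 0 -> c = - (D * b^*) -> d = D * a^* ->
  let P := mx2 a b 0 0 in
  let Q := mx2 0 0 c d in
  let R := mx2 c d 0 0 in
  let S := mx2 0 0 a b in
  forall l m : nat, (1 <= minn l m)%N ->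
     Xi P Q l m =
     (a ^+ l * (a^*) ^+ m * D ^+ m) *:
       \sum_(1 <= g < (minn l m).+1)
         ((- (`|b| ^+ 2 / `|a| ^+ 2)) ^+ g
            * ('C(l.-1, g.-1))%:R * ('C(m.-1, g.-1))%:R) *:
         (((l - g)%:R / (a * g%:R)) *: P
          + ((m - g)%:R / (D * a^* * g%:R)) *: Q
          - (1 / (D * b^*)) *: R
          + (1 / b) *: S).
Proof.
move=> a0 b0 D0 hc hd P Q R S [|l] [|m] // _.
have ac0 : a^* != 0 by rewrite conjC_eq0.
have bc0 : b^* != 0 by rewrite conjC_eq0.
have d0 : d != 0 by rewrite hd mulf_neq0.
rewrite Xi_closed_form // /Xi_cf big_add1 /= big_mkord.
under eq_bigr do rewrite comb_subR combZ.
rewrite comb_sum combZ.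
set t := - (`|b| ^+ 2 / `|a| ^+ 2).
have t_ratio : t = - (b * b^*) / (a * a^*) by rewrite /t !normCK mulNr.
have -> : b * c / (a * d) = t by rewrite t_ratio hc hd; field; rewrite a0 D0 ac0.
rewrite !gfPP_SS gfPQ_SS [minn m.+1 l.+1]minnC.
congr comb; rewrite !(mulr_suml, mulr_sumr); apply: eq_bigr => k _.
- by rewrite natrM natr_binS subSS hd exprMn; field; rewrite nat1r pnatr_eq0 a0.
- by rewrite natrM natr_binS subSS hd exprMn; field; rewrite nat1r pnatr_eq0 ac0 D0.
- rewrite natrM [t ^+ _]exprS; move: (t ^+ k) => tk.
  by rewrite t_ratio hd exprMn; field; rewrite ?a0 ?b0 ?D0 ?ac0 ?bc0.
- rewrite natrM [t ^+ _]exprS; move: (t ^+ k) => tk.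
  by rewrite t_ratio hc hd exprMn; field; rewrite ?a0 ?b0 ?D0 ?ac0 ?bc0.
Qed.

Theorem lemma1 (C : numClosedFieldType) (a b c d : C) :
  unitary_mx (mx2 a b c d) ->
  a * b * c * d != 0 ->
  let D := a * d - b * c in
  let P := mx2 a b 0 0 in
  let Q := mx2 0 0 c d in
  let R := mx2 c d 0 0 in
  let S := mx2 0 0 a b in
  (forall l m : nat, (1 <= minn l m)%N ->
     Xi P Q l m =
     (a ^+ l * (a^*) ^+ m * D ^+ m) *:
       \sum_(1 <= g < (minn l m).+1)
         ((- (`|b| ^+ 2 / `|a| ^+ 2)) ^+ g
            * ('C(l.-1, g.-1))%:R * ('C(m.-1, g.-1))%:R) *:
         (((l - g)%:R / (a * g%:R)) *: P
          + ((m - g)%:R / (D * a^* * g%:R)) *: Q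
          - (1 / (D * b^*)) *: R
          + (1 / b) *: S)) /\
  (forall l : nat, (1 <= l)%N -> Xi P Q l 0 = a ^+ l.-1 *: P) /\
  (forall m : nat, (1 <= m)%N -> Xi P Q 0 m = (D ^+ m.-1 * (a^*) ^+ m.-1) *: Q).
Proof.
move=> U + D P Q R S.
rewrite !mulf_eq0 !negb_or => /andP[/andP[/andP[a0 b0] _] d0].
have [hc hd] : c = - (D * b^*) /\ d = D * a^* := unitary_mx2_row2 U.
have D0 : D != 0 by apply: contraNneq d0 => D0; rewrite hd D0 mul0r.
split; first exact: Xi_binomial.
split; first by case=> // l _; apply: XiS0_mx2.
by case=> // m _; rewrite Xi0S_mx2 [in d ^+ _]hd exprMn.
Qed.
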